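(* Let $h(p):=-s_\phi(p,p)$, $C:=\mathbb{E}[Q\mid S]$, $\mathrm{GL}(S):=\mathbb{E}[d_\phi(C,Q)]$, let $S_B$ be a binned version of $S$, and let $\mathscr{R}:\mathcal{X}\to\mathbb{N}$ be a partition of the feature space (write $\mathscr{R}$ for $\mathscr{R}(X)$). Define $\mathrm{GL}_{\mathrm{explained}}(S_B):=\mathbb{E}[\mathrm{Var}_h(\mathbb{E}[Q\mid S_B,\mathscr{R}]\mid S_B)]$, $\mathrm{GL}_{\mathrm{residual}}(S_B):=\mathbb{E}[\mathrm{Var}_h(Q\mid S_B,\mathscr{R})]$ and $\mathrm{GL}_{\mathrm{induced}}(S,S_B):=\mathbb{E}[\mathrm{Var}_h(C\mid S_B)]$. Then $$\mathrm{GL}(S)=\mathrm{GL}_{\mathrm{explained}}(S_B)-\mathrm{GL}_{\mathrm{induced}}(S,S_B)+\mathrm{GL}_{\mathrm{residual}}(S_B).$$ If the scoring rule is proper, then $\mathrm{GL}(S)\ge \mathrm{GL}_{\mathrm{explained}}(S_B)-\mathrm{GL}_{\mathrm{induced}}(S,S_B)$.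
   Context: Let $(X,Y)$ be jointly distributed with $X\in\mathcal{X}$ and $Y\in\{e_1,\dots,e_K\}$ (one-hot vectors of $\mathbb{R}^K$); $\Delta_K$ is the probability simplex; $Q\in\Delta_K$ with $Q_k:=P(Y=e_k\mid X)$; $S=f(X)\in\Delta_K$ for a classifier $f$. A scoring rule is $\phi:\Delta_K\times\{e_1,\dots,e_K\}\to\mathbb{R}$, with $s_\phi(P,q):=\sum_k\phi(P,e_k)q_k$ and $d_\phi(P,q):=s_\phi(P,q)-s_\phi(q,q)$; $\phi$ is proper if $d_\phi\ge0$. For $f:\mathbb{R}^d\to\mathbb{R}$, $\mathrm{Var}_f(U\mid V):=\mathbb{E}[f(U)\mid V]-f(\mathbb{E}[U\mid V])$. Binned classifier: given a partition $\{\mathcal{B}_j\}_{1\le j\le J}$ of $\Delta_K$, $S_B$ equals $\mathbb{E}[S\mid S\in\mathcal{B}_j]$ on $\{S\in\mathcal{B}_j\}$. All required expectations are assumed to exist. *)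

From HB Require Import structures.
From mathcomp Require Import all_boot all_order all_algebra.
From mathcomp Require Import all_classical all_reals all_analysis.
Set Implicit Arguments.
Unset Strict Implicit.
Unset Printing Implicit Defensive.
Import Order.TTheory GRing.Theory Num.Theory.
Import numFieldNormedType.Exports.
Local Open Scope classical_set_scope.
Local Open Scope ring_scope.

Section Defs.
Context {R : realType}.

Definition simplex (K : nat) : set ('I_K -> R) :=
  [set p | (forall k, 0 <= p k) /\ \sum_(k < K) p k = 1].


Definition borelK (K : nat) : set (set ('I_K -> R)) :=
  <<s [set E | exists (k : 'I_K) (A : set R),
          measurable A /\ E = (fun v : 'I_K -> R => v k) @^-1` A] >>.


(* scoring rule phi : Delta_K x {e_1..e_K} -> R, with e_k encoded as k *)
Definition s_phi (K : nat) (phi : ('I_K -> R) -> 'I_K -> R)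
  (P q : 'I_K -> R) : R := \sum_(k < K) phi P k * q k.
Definition d_phi (K : nat) (phi : ('I_K -> R) -> 'I_K -> R)
  (P q : 'I_K -> R) : R := s_phi phi P q - s_phi phi q q.
Definition h_phi (K : nat) (phi : ('I_K -> R) -> 'I_K -> R)
  (p : 'I_K -> R) : R := - s_phi phi p p.
Definition proper_scoring (K : nat) (phi : ('I_K -> R) -> 'I_K -> R) : Prop :=
  forall P q, @simplex K P -> @simplex K q -> 0 <= d_phi phi P q.

Definition phi_measurable (K : nat) (phi : ('I_K -> R) -> 'I_K -> R) : Prop :=
  forall k (B : set R), measurable B -> @borelK K ((fun v => phi v k) @^-1` B).

Context {d : measure_display} {Omega : measurableType d}.

Definition sigma_vec (K : nat) (V : Omega -> 'I_K -> R) : set (set Omega) :=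
  [set V @^-1` A | A in @borelK K].
Definition sigma_nat (N : Omega -> nat) : set (set Omega) :=
  [set N @^-1` A | A in [set: set nat]].
Definition sigma_of {d'} {T : measurableType d'} (X : Omega -> T)
  : set (set Omega) := [set X @^-1` A | A in [set A : set T | measurable A]].
Definition sigma_join (G1 G2 : set (set Omega)) : set (set Omega) :=
  <<s G1 `|` G2 >>.

Variable P : probability Omega R.

Definition Exp (Z : Omega -> R) : R := \int[P]_w Z w.

Definition is_cond_exp (G : set (set Omega)) (Z W : Omega -> R) : Prop :=
  [/\ (forall B : set R, measurable B -> G (W @^-1` B)),
      P.-integrable setT (EFin \o W) &
      forall A, G A ->
        (\int[P]_(w in A) (W w)%:E = \int[P]_(w in A) (Z w)%:E)%E].

Definition is_cond_expv (K : nat) (G : set (set Omega))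
  (Z W : Omega -> 'I_K -> R) : Prop :=
  forall k, is_cond_exp G (fun w => Z w k) (fun w => W w k).

(* binned classifier: S_B = E[S | S in B_j] on {S in B_j} *)
Definition binned (K J : nat) (B : 'I_J -> set ('I_K -> R))
  (S : Omega -> 'I_K -> R) : Omega -> 'I_K -> R :=
  fun w k => \sum_(j < J) \1_(S @^-1` B j) w *
     ((\int[P]_(u in S @^-1` B j) S u k) / fine (P (S @^-1` B j))).

End Defs.
Arguments simplex {R} K.
Arguments borelK {R} K.

(* Write Eh(W) for the expected entropy E[h(W)] = -E[s_phi(W, W)].  Since the
   score phi(C, .) is sigma(S)-measurable, the defining property of C = E[Q | S]
   gives E[s_phi(C, Q)] = E[s_phi(C, C)], so GL(S) = Eh(Q) - Eh(C).  Likewise,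
   with Q_BR = E[Q | S_B, R],
     GL_explained = Eh(Q_BR) - Eh(E[Q_BR | S_B]),
     GL_induced   = Eh(C) - Eh(E[C | S_B]),
     GL_residual  = Eh(Q) - Eh(Q_BR).
   As S_B is a function of S, both E[Q_BR | S_B] and E[C | S_B] are versions of
   E[Q | S_B], hence agree almost surely, and the sum telescopes.  For a proper
   rule GL_residual = E[d_phi(Q_BR, Q)] >= 0.  The tower property itself is
   obtained by approximating the measurable factor by simple functions. *)

From HB Require Import structures.
From mathcomp Require Import all_boot all_order all_algebra.
From mathcomp Require Import all_classical all_reals all_analysis.
From mathcomp Require Import measurable_realfun ring lra.
Import Order.TTheory GRing.Theory Num.Theory.
Import numFieldNormedType.Exports HBNNSimple.
Local Open Scope classical_set_scope.
Local Open Scope ring_scope.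

Definition measurable_wrt {T : Type} {R : realType} (G : set (set T))
    (Z : T -> R) : Prop :=
  forall B : set R, measurable B -> G (Z @^-1` B).

Section integration.
Context {R : realType} {d : measure_display} {T : measurableType d}
  {mu : {measure set T -> \bar R}}.

Lemma integral_indicM (A : set T) (W : T -> R) :
  (\int[mu]_w (\1_A w * W w)%:E = \int[mu]_(w in A) (W w)%:E)%E.
Proof.
rewrite [RHS]integral_mkcond; apply: eq_integral => w _.
by rewrite /patch indicE; case: (w \in A); rewrite ?mul1r ?mul0r.
Qed.

Lemma dyadic_approxE (F : T -> R) n k :
  dyadic_approx setT (EFin \o F) n k =
  F @^-1` (if (k < n * 2 ^ n)%N then [set` dyadic_itv R n k] else set0).
Proof.
rewrite /dyadic_approx; case: ifP => _ //; rewrite setTI.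
apply/seteqP; split => [x /set_mem [r rI [rF]] | x Fx]; first by rewrite /= -rF.
by apply/mem_set; exists (F x).
Qed.

Lemma integer_approxE (F : T -> R) n :
  integer_approx setT (EFin \o F) n = F @^-1` `[n%:R, +oo[.
Proof.
rewrite /integer_approx setTI; apply/seteqP; split => x /=;
  by rewrite in_itv /= andbT lee_fin.
Qed.

Section approximation.
Variables F W : T -> R.
Hypotheses (mF : measurable_fun setT F) (mW : measurable_fun setT W).
Hypothesis W0 : forall w, 0 <= W w.

Let measurable_scaled_indicM (c : R) (A : set T) : measurable A ->
  measurable_fun setT (fun w => (c * \1_A w * W w)%:E).
Proof.
move=> mA; apply/measurable_EFinP/measurable_funM => //.
by apply: measurable_funM => //; exact: measurable_indic.
Qed.

Let scaled_indicM_ge0 (c : R) (A : set T) w : 0 <= c ->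
  (0 <= (c * \1_A w * W w)%:E)%E.
Proof. by move=> c0; rewrite lee_fin !mulr_ge0. Qed.

Let integral_scaled_indicM (c : R) (A : set T) : 0 <= c -> measurable A ->
  (\int[mu]_w (c * \1_A w * W w)%:E = c%:E * \int[mu]_(w in A) (W w)%:E)%E.
Proof.
move=> c0 mA; rewrite -integral_indicM -ge0_integralZl_EFin //.
- by apply: eq_integral => w _; rewrite -EFinM mulrA.
- by move=> w _; rewrite lee_fin mulr_ge0.
- by apply/measurable_EFinP/measurable_funM => //; exact: measurable_indic.
Qed.

Lemma integral_approxM n :
  (\int[mu]_w (approx setT (EFin \o F) n w * W w)%:E =
   \sum_(k < n * 2 ^ n) (k%:R * 2 ^- n)%:E *
      \int[mu]_(w in dyadic_approx setT (EFin \o F) n k) (W w)%:E +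
   n%:R%:E * \int[mu]_(w in integer_approx setT (EFin \o F) n) (W w)%:E)%E.
Proof.
have mpre (B : set R) : measurable B -> measurable (F @^-1` B).
  by move=> mB; rewrite -[X in measurable X]setTI; exact: mF.
have mA k : measurable (dyadic_approx setT (EFin \o F) n k).
  by rewrite dyadic_approxE; apply: mpre; case: ifP.
have mB : measurable (integer_approx setT (EFin \o F) n).
  by rewrite integer_approxE; exact: mpre.
under eq_integral => w _ do
  rewrite /approx mulrDl big_distrl /= EFinD -sumEFin.
rewrite ge0_integralD //; last 4 first.
- by move=> w _; apply: sume_ge0 => k _; exact: scaled_indicM_ge0.
- by apply: emeasurable_sum => k; exact: measurable_scaled_indicM.
- by move=> w _; exact: scaled_indicM_ge0.
- exact: measurable_scaled_indicM.
rewrite ge0_integral_sum //; [|by move=> k; exact: measurable_scaled_indicM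
                              |by move=> k w _; exact: scaled_indicM_ge0].
congr (_ + _)%E; last exact: integral_scaled_indicM.
by apply: eq_bigr => k _; exact: integral_scaled_indicM.
Qed.

Hypothesis F0 : forall w, 0 <= F w.

Lemma integral_approxM_lim :
  (\int[mu]_w (F w * W w)%:E =
   limn (fun n => \int[mu]_w (approx setT (EFin \o F) n w * W w)%:E))%E.
Proof.
have mEF := (measurable_EFinP setT F).2 mF.
have approx0 n w : 0 <= approx setT (EFin \o F) n w.
  rewrite /approx; apply: addr_ge0; last by rewrite mulr_ge0 // indicE.
  by apply: sumr_ge0 => k _; rewrite !mulr_ge0 // indicE.
have m_approx n : measurable_fun setT (approx setT (EFin \o F) n).
  rewrite -(nnsfun_approxE measurableT mEF n); exact: measurable_funPT.
rewrite -monotone_convergence //.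
- apply: eq_integral => w _; apply/esym/cvg_lim => //.
  apply: cvg_EFin; first exact: nearW.
  apply: cvgMr_tmp.
  exact: (@cvg_approx _ _ _ setT (EFin \o F) w (fun x _ => F0 x) I (ltry _)).
- by move=> n; apply/measurable_EFinP; exact: measurable_funM.
- by move=> n w _; rewrite lee_fin mulr_ge0.
- by move=> w _ m n mn; rewrite lee_fin ler_wpM2r //; exact/lefP/nd_approx.
Qed.

End approximation.

Lemma bounded_in01 [U : T -> R] :
  (forall w, 0 <= U w <= 1) -> [bounded U w | w in setT].
Proof.
move=> U01; exists 1; split => // M M1 w _ /=.
have /andP[U0 U1] := U01 w.
by rewrite ger0_norm // (le_trans U1) // ltW.
Qed.

Lemma measurable_of_integrable [f : T -> R] :
  mu.-integrable setT (EFin \o f) -> measurable_fun setT f.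
Proof. by move=> intf; apply/measurable_EFinP; exact: measurable_int intf. Qed.

Lemma integrableM_in01 [Z U : T -> R] : mu.-integrable setT (EFin \o Z) ->
  measurable_fun setT U -> (forall w, 0 <= U w <= 1) ->
  mu.-integrable setT (EFin \o (fun w => Z w * U w)).
Proof.
move=> iZ mU U01.
apply: (eq_integrable measurableT _ _ _
  (integrableMl measurableT iZ mU (bounded_in01 U01))).
by move=> w _.
Qed.

Lemma measurable_wrt_comp [G : set (set T)] [g : R -> R] [Z : T -> R] :
  measurable_fun setT g -> measurable_wrt G Z -> measurable_wrt G (g \o Z).
Proof.
move=> mg GZ B mB; rewrite comp_preimage; apply: GZ.
by rewrite -[X in measurable X]setTI; exact: mg.
Qed.

Lemma integrableB_EFin [f g : T -> R] : mu.-integrable setT (EFin \o f) ->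
  mu.-integrable setT (EFin \o g) ->
  mu.-integrable setT (EFin \o (fun w => f w - g w)).
Proof.
move=> intf intg.
apply: (eq_integrable measurableT _ _ _ (integrableB measurableT intf intg)).
by move=> w _; rewrite /= EFinB.
Qed.

Lemma integrable_sum_EFin (I : Type) (s : seq I) (f : I -> T -> R) :
  (forall i, mu.-integrable setT (EFin \o f i)) ->
  mu.-integrable setT (EFin \o (fun w => \sum_(i <- s) f i w)).
Proof.
move=> intf.
apply: (eq_integrable measurableT (fun w => \sum_(i <- s) (f i w)%:E)%E).
  by move=> w _; rewrite /= sumEFin.
by apply: integrable_sum => // i _; exact: intf.
Qed.

Lemma Rintegral_sum (I : Type) (s : seq I) (f : I -> T -> R) :
  (forall i, mu.-integrable setT (EFin \o f i)) ->
  \int[mu]_w (\sum_(i <- s) f i w) = \sum_(i <- s) \int[mu]_w f i w.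
Proof.
move=> intf; elim: s => [|i s IHs].
  under eq_Rintegral do rewrite big_nil.
  by rewrite big_nil /Rintegral integral0.
under eq_Rintegral do rewrite big_cons.
by rewrite RintegralD // ?IHs ?big_cons //; exact: integrable_sum_EFin.
Qed.

Section cond_exp_pairing.
Variables (G : set (set T)) (U V : T -> R).
Hypothesis UV : forall A, G A ->
  (\int[mu]_(w in A) (V w)%:E = \int[mu]_(w in A) (U w)%:E)%E.
Hypotheses (mU : measurable_fun setT U) (mV : measurable_fun setT V).
Hypotheses (U01 : forall w, 0 <= U w <= 1) (V01 : forall w, 0 <= V w <= 1).

Let cond_exp_pairing_ge0 (F : T -> R) : measurable_fun setT F ->
  (forall w, 0 <= F w) -> measurable_wrt G F ->
  (\int[mu]_w (F w * U w)%:E = \int[mu]_w (F w * V w)%:E)%E.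
Proof.
move=> mF F0 GF.
have U0 w : 0 <= U w by case/andP: (U01 w).
have V0 w : 0 <= V w by case/andP: (V01 w).
rewrite !integral_approxM_lim //; congr (limn _); apply/funext => n.
rewrite !integral_approxM //; congr (_ + _)%E.
  apply: eq_bigr => k _; congr (_ * _)%E.
  rewrite UV // dyadic_approxE; apply: GF.
  by case: ifP => _ //; exact: measurable_itv.
by congr (_ * _)%E; rewrite UV // integer_approxE; apply: GF.
Qed.

(* Split Z into positive and negative parts and approximate each by simple
   functions whose level sets are preimages under Z, hence in G. *)
Lemma cond_exp_pairing [Z : T -> R] : measurable_wrt G Z ->
  mu.-integrable setT (EFin \o Z) ->
  \int[mu]_w (Z w * U w) = \int[mu]_w (Z w * V w).
Proof.
move=> GZ iZ.
have mZ := measurable_of_integrable iZ.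
have pos_neg (W : T -> R) : measurable_fun setT W -> (forall w, 0 <= W w <= 1) ->
    \int[mu]_w (Z w * W w) =
    \int[mu]_w (Z^\+ w * W w) - \int[mu]_w (Z^\- w * W w).
  move=> mW W01; rewrite -RintegralB //.
  - by apply: eq_Rintegral => w _; rewrite -mulrBl -[in LHS](funrposBneg Z).
  - exact: integrableM_in01 (integrable_funrpos measurableT iZ) mW W01.
  - exact: integrableM_in01 (integrable_funrneg measurableT iZ) mW W01.
rewrite !pos_neg //; congr (_ - _); rewrite /Rintegral; congr fine;
  apply: cond_exp_pairing_ge0.
- exact: measurable_funrpos.
- exact: funrpos_ge0.
- exact (measurable_wrt_comp (measurable_funrpos (@measurable_id _ R setT)) GZ).
- exact: measurable_funrneg.
- exact: funrneg_ge0.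
- exact (measurable_wrt_comp (measurable_funrneg (@measurable_id _ R setT)) GZ).
Qed.

End cond_exp_pairing.
End integration.
Arguments cond_exp_pairing {R d T mu G U V} UV mU mV U01 V01 [Z].

Lemma simplex_in01 {R : realType} K (p : 'I_K -> R) :
  simplex K p -> forall k, 0 <= p k <= 1.
Proof.
move=> [p0 p1] k; rewrite p0 /= -p1 (bigD1 k) //= lerDl.
by apply: sumr_ge0 => i _.
Qed.

Lemma sigma_algebra_setT {T : Type} (G : set (set T)) :
  sigma_algebra setT G -> G setT.
Proof. by case=> G0 GC _; rewrite -(setD0 setT); exact: GC. Qed.

Lemma borelK_preimage {R : realType} {T : Type} (G : set (set T)) K
    (W : T -> 'I_K -> R) : sigma_algebra setT G ->
  (forall k, measurable_wrt G (fun w => W w k)) ->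
  forall E, borelK K E -> G (W @^-1` E).
Proof.
move=> sG GW E BE.
have : image_set_system setT W G E.
  apply: (smallest_sub (sigma_algebra_image W sG)) BE.
  by move=> _ [k [A [mA ->]]]; rewrite /image_set_system /= setTI; exact: GW.
by rewrite /image_set_system /= setTI.
Qed.

Lemma measurable_wrt_phi {R : realType} {T : Type} (G : set (set T)) K
    (phi : ('I_K -> R) -> 'I_K -> R) (W : T -> 'I_K -> R) :
  phi_measurable phi -> sigma_algebra setT G ->
  (forall k, measurable_wrt G (fun w => W w k)) ->
  forall k, measurable_wrt G (fun w => phi (W w) k).
Proof. by move=> mphi sG GW k B mB; exact: borelK_preimage (mphi k B mB). Qed.

Lemma sigma_algebra_sigma_vec {R : realType} {d} {Omega : measurableType d} [K]
  (V : Omega -> 'I_K -> R) : sigma_algebra setT (sigma_vec V).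
Proof.
have -> : sigma_vec V = preimage_set_system setT V (borelK K).
  rewrite /sigma_vec /preimage_set_system; congr image.
  by apply/funext => E; rewrite setTI.
exact: sigma_algebra_preimage (smallest_sigma_algebra _ _).
Qed.

(* The binned classifier is a function of S: it is constant on each bin. *)
Lemma sigma_vec_binned_sub {R : realType} {d} {Omega : measurableType d}
    (P : probability Omega R) K J (B : 'I_J -> set ('I_K -> R))
    (S : Omega -> 'I_K -> R) :
  (forall j, borelK K (B j)) -> (forall i j, i != j -> B i `&` B j = set0) ->
  (forall w, exists j, B j (S w)) ->
  sigma_vec (binned P B S) `<=` sigma_vec S.
Proof.
move=> BjE Bdisj Bcov _ [A _ <-].
set c := fun j k => (\int[P]_(u in S @^-1` B j) S u k) / fine (P (S @^-1` B j)).
have notin_other j j0 w : j != j0 -> B j0 (S w) -> ~ B j (S w).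
  move=> jj0 Bj0 Bj; have : (B j `&` B j0) (S w) by split.
  by rewrite Bdisj.
exists (\bigcup_(j in [set j | A (c j)]) B j).
  exact: (@fin_bigcup_measurable _ (g_sigma_algebraType _) _ _ _ finite_finset
    (fun j _ => BjE j)).
have SBw w j0 : B j0 (S w) -> binned P B S w = c j0.
  move=> Bj0; apply/funext => k; rewrite /binned (bigD1 j0) //= big1 ?addr0.
    by rewrite indicE mem_set // mul1r.
  by move=> j jj0; rewrite indicE memNset ?mul0r //; exact: notin_other jj0 Bj0.
apply/seteqP; split => w /=; have [j0 Bj0] := Bcov w; rewrite (SBw _ _ Bj0).
- move=> [j Aj Bj]; case: (eqVneq j j0) => [<- // | jj0].
  by case: (notin_other _ _ _ jj0 Bj0 Bj).
- by exists j0.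
Qed.

Section cond_exp.
Context {R : realType} {d : measure_display} {Omega : measurableType d}
  {P : probability Omega R}.

Lemma measurable_cond_exp [G : set (set Omega)] [Z W : Omega -> R] :
  is_cond_exp P G Z W -> measurable_fun setT W.
Proof. by case=> _ iW _; exact: measurable_of_integrable iW. Qed.

Lemma ExpB (Z1 Z2 : Omega -> R) : P.-integrable setT (EFin \o Z1) ->
  P.-integrable setT (EFin \o Z2) ->
  Exp P (fun w => Z1 w - Z2 w) = Exp P Z1 - Exp P Z2.
Proof. exact: RintegralB. Qed.

Lemma Exp_ae_eq (Z1 Z2 : Omega -> R) : P.-integrable setT (EFin \o Z1) ->
  P.-integrable setT (EFin \o Z2) -> {ae P, forall w, Z1 w = Z2 w} ->
  Exp P Z1 = Exp P Z2.
Proof.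
move=> iZ1 iZ2 Z12; rewrite /Exp /Rintegral; congr fine.
apply: ae_eq_integral => //;
  [exact: measurable_int iZ1|exact: measurable_int iZ2|].
by apply: filterS Z12 => w /= ->.
Qed.

Lemma Exp_cond_exp [G : set (set Omega)] [Z W : Omega -> R] :
  sigma_algebra setT G -> is_cond_exp P G Z W -> Exp P W = Exp P Z.
Proof.
by move=> sG [_ _ WZ]; rewrite /Exp /Rintegral WZ //; exact: sigma_algebra_setT.
Qed.

Lemma cond_exp_tower_pairing [G G' : set (set Omega)] [U V M Z : Omega -> R] :
  G `<=` G' -> is_cond_exp P G' U V -> is_cond_exp P G V M ->
  measurable_fun setT U -> (forall w, 0 <= U w <= 1) ->
  (forall w, 0 <= V w <= 1) -> (forall w, 0 <= M w <= 1) ->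
  measurable_wrt G Z -> P.-integrable setT (EFin \o Z) ->
  \int[P]_w (Z w * M w) = \int[P]_w (Z w * U w).
Proof.
move=> GG' hV hM mU U01 V01 M01 GZ iZ.
have [_ _ VU] := hV; have [_ _ MV] := hM.
have mV := measurable_cond_exp hV; have mM := measurable_cond_exp hM.
rewrite -(cond_exp_pairing MV mV mM V01 M01 GZ iZ).
by rewrite -(cond_exp_pairing VU mU mV U01 V01 (fun B mB => GG' _ (GZ B mB)) iZ).
Qed.

(* [(U - V)^2 = (U - V) U - (U - V) V] integrates to zero. *)
Lemma pairing_ae_eq [G : set (set Omega)] [U V : Omega -> R] :
  measurable_wrt G U -> measurable_wrt G V ->
  P.-integrable setT (EFin \o U) -> P.-integrable setT (EFin \o V) ->
  (forall w, 0 <= U w <= 1) -> (forall w, 0 <= V w <= 1) ->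
  (forall Z, measurable_wrt G Z -> P.-integrable setT (EFin \o Z) ->
     \int[P]_w (Z w * U w) = \int[P]_w (Z w * V w)) ->
  {ae P, forall w, U w = V w}.
Proof.
move=> GU GV iU iV U01 V01 UV.
have mU := measurable_of_integrable iU; have mV := measurable_of_integrable iV.
have iUU := integrableM_in01 iU mU U01; have iUV := integrableM_in01 iU mV V01.
have iVU := integrableM_in01 iV mU U01; have iVV := integrableM_in01 iV mV V01.
have isq : P.-integrable setT (EFin \o (fun w => (U w - V w) ^+ 2)).
  apply: (eq_integrable measurableT _ _ _
    (integrableB_EFin (integrableB_EFin iUU iUV) (integrableB_EFin iVU iVV))).
  by move=> w _ /=; congr EFin; ring.
have sq0 : \int[P]_w ((U w - V w) ^+ 2) = 0.
  transitivity (\int[P]_w ((U w * U w - U w * V w) - (V w * U w - V w * V w))).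
    by apply: eq_Rintegral => w _; ring.
  rewrite RintegralB //; [|exact: integrableB_EFin|exact: integrableB_EFin].
  by rewrite !RintegralB // (UV U) // (UV V) // !subrr.
have /ae_eq_integral_abs : (\int[P]_w `|((U w - V w) ^+ 2)%:E| = 0)%E.
  under eq_integral do rewrite gee0_abs ?lee_fin ?sqr_ge0 //.
  rewrite -(fineK (integrable_fin_num measurableT isq)).
  by rewrite -/(Rintegral _ _ _) sq0.
move=> /(_ measurableT (measurable_int _ isq)).
apply: filterS => w /(_ I) /= [] /eqP.
by rewrite sqrf_eq0 subr_eq0 => /eqP.
Qed.

Lemma cond_expv_tower_ae_eq [K : nat] [G G1 G2 : set (set Omega)]
    [Q V1 V2 M1 M2 : Omega -> 'I_K -> R] :
  G `<=` G1 -> G `<=` G2 ->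
  is_cond_expv P G1 Q V1 -> is_cond_expv P G V1 M1 ->
  is_cond_expv P G2 Q V2 -> is_cond_expv P G V2 M2 ->
  (forall k, measurable_fun setT (fun w => Q w k)) ->
  (forall w, simplex K (Q w)) ->
  (forall w, simplex K (V1 w)) -> (forall w, simplex K (V2 w)) ->
  (forall w, simplex K (M1 w)) -> (forall w, simplex K (M2 w)) ->
  {ae P, forall w, M1 w = M2 w}.
Proof.
move=> GG1 GG2 hV1 hM1 hV2 hM2 mQ Q1 V11 V21 M11 M21.
have coord k : {ae P, forall w, M1 w k = M2 w k}.
  have [GM1 iM1 _] := hM1 k; have [GM2 iM2 _] := hM2 k.
  apply: (pairing_ae_eq GM1 GM2 iM1 iM2) => [w|w|Z GZ iZ];
    try exact: simplex_in01.
  rewrite (cond_exp_tower_pairing GG1 (hV1 k) (hM1 k)) //;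
    try by move=> w; exact: simplex_in01.
  rewrite (cond_exp_tower_pairing GG2 (hV2 k) (hM2 k)) //;
    by move=> w; exact: simplex_in01.
apply: filterS (filter_forall _ coord) => w M12; apply/funext => k; exact: M12.
Qed.

End cond_exp.

Section scoring_rule.
Context {R : realType} {d : measure_display} {Omega : measurableType d}
  {P : probability Omega R} {K : nat} {phi : ('I_K -> R) -> 'I_K -> R}.
Implicit Types (G : set (set Omega)) (Q V W : Omega -> 'I_K -> R).

Lemma integrable_s_phi [W V] :
  (forall k, P.-integrable setT (EFin \o (fun w => phi (W w) k))) ->
  (forall k, measurable_fun setT (fun w => V w k)) ->
  (forall w, simplex K (V w)) ->
  P.-integrable setT (EFin \o (fun w => s_phi phi (W w) (V w))).
Proof.
move=> iW mV V1; apply: integrable_sum_EFin => k.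
by apply: integrableM_in01 (iW k) (mV k) _ => w; exact: simplex_in01.
Qed.

Lemma integrable_h_phi [W] :
  (forall k, P.-integrable setT (EFin \o (fun w => phi (W w) k))) ->
  (forall k, measurable_fun setT (fun w => W w k)) ->
  (forall w, simplex K (W w)) ->
  P.-integrable setT (EFin \o (fun w => h_phi phi (W w))).
Proof.
move=> iW mW W1.
apply: (eq_integrable measurableT _ _ _
  (integrableZl measurableT (-1) (integrable_s_phi iW mW W1))).
by move=> w _ /=; rewrite -EFinM mulN1r.
Qed.

Lemma Exp_s_phi [W V] :
  (forall k, P.-integrable setT (EFin \o (fun w => phi (W w) k))) ->
  (forall k, measurable_fun setT (fun w => V w k)) ->
  (forall w, simplex K (V w)) ->
  Exp P (fun w => s_phi phi (W w) (V w)) =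
  \sum_(k < K) \int[P]_w (phi (W w) k * V w k).
Proof.
move=> iW mV V1; apply: Rintegral_sum => k.
by apply: integrableM_in01 (iW k) (mV k) _ => w; exact: simplex_in01.
Qed.

Lemma Exp_h_phi [W] :
  (forall k, P.-integrable setT (EFin \o (fun w => phi (W w) k))) ->
  (forall k, measurable_fun setT (fun w => W w k)) ->
  (forall w, simplex K (W w)) ->
  Exp P (fun w => h_phi phi (W w)) = - Exp P (fun w => s_phi phi (W w) (W w)).
Proof.
move=> iW mW W1; rewrite /Exp /h_phi.
under eq_Rintegral do rewrite -mulN1r.
by rewrite RintegralZl ?mulN1r //; exact: integrable_s_phi.
Qed.

(* [phi (W w) k] is G-measurable, so it pairs equally with [Q] and with [W]. *)
Lemma Exp_s_phi_cond_exp [G Q W] :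
  phi_measurable phi -> sigma_algebra setT G -> is_cond_expv P G Q W ->
  (forall k, measurable_fun setT (fun w => Q w k)) ->
  (forall w, simplex K (Q w)) -> (forall w, simplex K (W w)) ->
  (forall k, P.-integrable setT (EFin \o (fun w => phi (W w) k))) ->
  Exp P (fun w => s_phi phi (W w) (Q w)) =
  Exp P (fun w => s_phi phi (W w) (W w)).
Proof.
move=> mphi sG hW mQ Q1 W1 iW.
have mW k := measurable_cond_exp (hW k).
rewrite !Exp_s_phi //; apply: eq_bigr => k _.
have [_ _ WQ] := hW k.
apply: (cond_exp_pairing WQ (mQ k) (mW k)) (iW k) => [w|w|];
  try exact: simplex_in01.
by apply: measurable_wrt_phi => // j; have [] := hW j.
Qed.

Lemma Exp_d_phi_cond_exp [G Q W] :
  phi_measurable phi -> sigma_algebra setT G -> is_cond_expv P G Q W ->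
  (forall k, measurable_fun setT (fun w => Q w k)) ->
  (forall w, simplex K (Q w)) -> (forall w, simplex K (W w)) ->
  (forall k, P.-integrable setT (EFin \o (fun w => phi (Q w) k))) ->
  (forall k, P.-integrable setT (EFin \o (fun w => phi (W w) k))) ->
  Exp P (fun w => d_phi phi (W w) (Q w)) =
  Exp P (fun w => h_phi phi (Q w)) - Exp P (fun w => h_phi phi (W w)).
Proof.
move=> mphi sG hW mQ Q1 W1 iQ iW.
have mW k := measurable_cond_exp (hW k).
rewrite /d_phi ExpB; [|exact: integrable_s_phi..].
by rewrite (Exp_s_phi_cond_exp mphi sG hW) // !Exp_h_phi //; lra.
Qed.

Lemma Exp_sub_h_phi_cond_exp [G V W] [H : Omega -> R] :
  sigma_algebra setT G -> is_cond_exp P G (fun w => h_phi phi (V w)) H ->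
  (forall k, P.-integrable setT (EFin \o (fun w => phi (W w) k))) ->
  (forall k, measurable_fun setT (fun w => W w k)) ->
  (forall w, simplex K (W w)) ->
  Exp P (fun w => H w - h_phi phi (W w)) =
  Exp P (fun w => h_phi phi (V w)) - Exp P (fun w => h_phi phi (W w)).
Proof.
move=> sG hH iW mW W1; have [_ iH _] := hH.
by rewrite ExpB ?(Exp_cond_exp sG hH) //; exact: integrable_h_phi.
Qed.

End scoring_rule.

Theorem proposition2
  (R : realType) (d : measure_display) (Omega : measurableType d)
  (P : probability Omega R) (K : nat)
  (dX : measure_display) (Xsp : measurableType dX)
  (X : Omega -> Xsp) (hX : measurable_fun setT X)
  (Y : Omega -> 'I_K) (hY : forall k, measurable [set w | Y w = k])
  (phi : ('I_K -> R) -> 'I_K -> R) (hphi : phi_measurable phi)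
  (f : Xsp -> 'I_K -> R) (hf : forall k, measurable_fun setT (fun x => f x k))
  (hfS : forall x, simplex K (f x))
  (J : nat) (B : 'I_J -> set ('I_K -> R))
  (hBm : forall j, borelK K (B j))
  (hBsub : forall j, B j `<=` simplex K)
  (hBcov : simplex K `<=` \bigcup_(j in [set: 'I_J]) B j)
  (hBdisj : forall i j : 'I_J, i != j -> B i `&` B j = set0)
  (Rp : Xsp -> nat) (hRp : forall n, measurable (Rp @^-1` [set n]))
  (Q : Omega -> 'I_K -> R)
  (hQ : is_cond_expv P (sigma_of X) (fun w k => (\1_[set u | Y u = k] w : R)) Q)
  (hQS : forall w, simplex K (Q w)) :
  let S := fun w => f (X w) in
  let SB := binned P B S in
  let Rv := fun w => Rp (X w) in
  let GSB := sigma_vec SB in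
  let GSBR := sigma_join (sigma_vec SB) (sigma_nat Rv) in
  let h := h_phi phi in
  forall (C : Omega -> 'I_K -> R)
    (hC : is_cond_expv P (sigma_vec S) Q C) (hCS : forall w, simplex K (C w))
    (QBR : Omega -> 'I_K -> R)
    (hQBR : is_cond_expv P GSBR Q QBR) (hQBRS : forall w, simplex K (QBR w))
    (M1 : Omega -> 'I_K -> R)
    (hM1 : is_cond_expv P GSB QBR M1) (hM1S : forall w, simplex K (M1 w))
    (H1 : Omega -> R) (hH1 : is_cond_exp P GSB (fun w => h (QBR w)) H1)
    (M2 : Omega -> 'I_K -> R)
    (hM2 : is_cond_expv P GSB C M2) (hM2S : forall w, simplex K (M2 w))
    (H2 : Omega -> R) (hH2 : is_cond_exp P GSB (fun w => h (C w)) H2)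
    (H3 : Omega -> R) (hH3 : is_cond_exp P GSBR (fun w => h (Q w)) H3)
    (hint : forall k, [/\ P.-integrable setT (EFin \o (fun w => phi (Q w) k)),
       P.-integrable setT (EFin \o (fun w => phi (C w) k)),
       P.-integrable setT (EFin \o (fun w => phi (QBR w) k)),
       P.-integrable setT (EFin \o (fun w => phi (M1 w) k)) &
       P.-integrable setT (EFin \o (fun w => phi (M2 w) k))]),
  let GL := Exp P (fun w => d_phi phi (C w) (Q w)) in
  let GL_explained := Exp P (fun w => H1 w - h (M1 w)) in
  let GL_induced := Exp P (fun w => H2 w - h (M2 w)) in
  let GL_residual := Exp P (fun w => H3 w - h (QBR w)) in
  GL = GL_explained - GL_induced + GL_residual /\
  (proper_scoring phi -> GL_explained - GL_induced <= GL).
Proof.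
move=> S SB Rv GSB GSBR h C hC hCS QBR hQBR hQBRS M1 hM1 hM1S H1 hH1
  M2 hM2 hM2S H2 hH2 H3 hH3 /all_and5[iQ iC iQBR iM1 iM2]
  GL GL_explained GL_induced GL_residual.
have sGSB : sigma_algebra setT GSB := sigma_algebra_sigma_vec SB.
have sGSBR : sigma_algebra setT GSBR := smallest_sigma_algebra _ _.
have GSB_GS : GSB `<=` sigma_vec S.
  apply: sigma_vec_binned_sub => // w.
  by have [j _] := hBcov _ (hfS (X w)); exists j.
have GSB_GSBR : GSB `<=` GSBR by move=> A GA; apply: sub_sigma_algebra; left.
have mQ k := measurable_cond_exp (hQ k).
have mQBR k := measurable_cond_exp (hQBR k).
have mM1 k := measurable_cond_exp (hM1 k).
have mM2 k := measurable_cond_exp (hM2 k).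
have eGL : GL = _ :=
  Exp_d_phi_cond_exp hphi (sigma_algebra_sigma_vec S) hC mQ hQS hCS iQ iC.
have eRes : GL_residual = _ := Exp_sub_h_phi_cond_exp sGSBR hH3 iQBR mQBR hQBRS.
have eExp : GL_explained = _ := Exp_sub_h_phi_cond_exp sGSB hH1 iM1 mM1 hM1S.
have eInd : GL_induced = _ := Exp_sub_h_phi_cond_exp sGSB hH2 iM2 mM2 hM2S.
have eM : Exp P (fun w => h_phi phi (M1 w)) = Exp P (fun w => h_phi phi (M2 w)).
  apply: Exp_ae_eq; [exact: integrable_h_phi iM1 mM1 hM1S|
                     exact: integrable_h_phi iM2 mM2 hM2S|].
  apply: filterS (cond_expv_tower_ae_eq GSB_GSBR GSB_GS hQBR hM1 hC hM2 mQ hQS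
    hQBRS hCS hM1S hM2S) => w; exact: congr1.
split; first lra.
move=> proper_phi; suff : 0 <= GL_residual by lra.
rewrite eRes -(Exp_d_phi_cond_exp hphi sGSBR hQBR mQ hQS hQBRS iQ iQBR).
by apply: Rintegral_ge0 => w _; exact: proper_phi.
Qed.
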